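(* Let $A\in\mathbf{bal}$ and let $e:A\to A^\sigma$ be its canonical extension. Then for every basic algebra $C$ and every $\mathbf{bal}$-morphism $\alpha:A\to C$ there is a unique normal homomorphism $\gamma:A^\sigma\to C$ with $\gamma\circ e=\alpha$. Hence $A\mapsto A^\sigma$ is a reflector and $\mathbf{balg}$ is a (non-full) reflective subcategory of $\mathbf{bal}$.
   Context: An $\ell$-algebra is a commutative unital $\mathbb{R}$-algebra with a lattice order compatible with addition, with products and nonnegative scalar multiples of nonnegative elements nonnegative. It is bounded if each $a\le n\cdot1$ for some $n\in\mathbb{N}$, archimedean if $n\cdot a\le b$ for all $n$ implies $a\le0$. $\mathbf{bal}$ is the category of bounded archimedean $\ell$-algebras and unital $\ell$-algebra homomorphisms. An $\ell$-algebra is Dedekind complete if every subset bounded above has a least upper bound. The idempotents $\mathrm{Id}(A)$ form a boolean algebra with $e\vee f=e+f-ef$, $e\wedge f=ef$, $\neg e=1-e$. A basic algebra is a Dedekind complete $A\in\mathbf{bal}$ with $\mathrm{Id}(A)$ atomic. A normal homomorphism between basic algebras is a $\mathbf{bal}$-morphism preserving all existing joins and meets; $\mathbf{balg}$ is the category of basic algebras and normal homomorphisms. A canonical extension of $A\in\mathbf{bal}$ is a basic algebra $A^\sigma$ with a $\mathbf{bal}$-monomorphism $e:A\to A^\sigma$ such that (Density) every element of $A^\sigma$ is a join of meets of elements of $e[A]$, and (Compactness) for $S,T\subseteq A$ and real $\varepsilon>0$, $\bigwedge e[S]+\varepsilon\le\bigvee e[T]$ implies $\bigwedge e[S']\le\bigvee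 e[T']$ for some finite $S'\subseteq S$, $T'\subseteq T$. Every $A\in\mathbf{bal}$ has a canonical extension, unique up to isomorphism, namely the algebra $B(Y_A)$ of all bounded real functions on the set $Y_A$ of maximal $\ell$-ideals of $A$, with $e(a)(M)=r$ where $a+M=r+M$. *)

From HB Require Import structures.
From mathcomp Require Import all_boot all_order all_algebra.
From mathcomp Require Import Rstruct.
From Stdlib Require Import Reals.

Set Implicit Arguments.
Unset Strict Implicit.
Unset Printing Implicit Defensive.

Import GRing.Theory Num.Theory.
Local Open Scope ring_scope.

Notation R := Rdefinitions.R.

(* A (possibly trivial) commutative unital ring carrying a scalar action of R
   and a relation [le]; the axioms making it an l-algebra are in [lalg_axioms]. *)
Record lalg := LAlg {
  lcar :> comPzRingType;
  sc : R -> lcar -> lcar;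
  le : lcar -> lcar -> Prop
}.

Section Defs.
Variable A : lalg.
Implicit Types (a b c : A) (X : A -> Prop).

Definition ub X u := forall x, X x -> le x u.
Definition lb X l := forall x, X x -> le l x.
Definition is_lub X s := ub X s /\ (forall u, ub X u -> le s u).
Definition is_glb X m := lb X m /\ (forall l, lb X l -> le l m).

Definition pair_set a b : A -> Prop := fun x => x = a \/ x = b.

Definition lalg_axioms : Prop :=
  (forall r a b, sc r (a + b) = sc r a + sc r b) /\
  (forall r s a, sc (r + s) a = sc r a + sc s a) /\
  (forall r s a, sc (r * s) a = sc r (sc s a)) /\
  (forall a, sc 1 a = a) /\
  (forall r a b, sc r (a * b) = sc r a * b) /\
  (forall a, le a a) /\
  (forall a b, le a b -> le b a -> a = b) /\
  (forall a b c, le a b -> le b c -> le a c) /\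
  (forall a b, exists s, is_lub (pair_set a b) s) /\
  (forall a b, exists m, is_glb (pair_set a b) m) /\
  (forall a b c, le a b -> le (a + c) (b + c)) /\
  (forall a b, le 0 a -> le 0 b -> le 0 (a * b)) /\
  (forall (r : R) a, (0 <= r)%R -> le 0 a -> le 0 (sc r a)).

Definition bounded : Prop := forall a, exists n : nat, le a (1 *+ n).

Definition archimedean : Prop :=
  forall a b, (forall n : nat, le (a *+ n) b) -> le a 0.

Definition bal : Prop := lalg_axioms /\ bounded /\ archimedean.

Definition dedekind_complete : Prop :=
  forall X, (exists x, X x) -> (exists u, ub X u) -> exists s, is_lub X s.

Definition idempotent a := a * a = a.
(* in the boolean algebra Id(A): f <= e iff f /\ e = f e = f, bottom is 0 *)
Definition Id_atom a :=
  idempotent a /\ a <> 0 /\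
  (forall f, idempotent f -> f * a = f -> f = 0 \/ f = a).
Definition Id_atomic : Prop :=
  forall e, idempotent e -> e <> 0 -> exists p, Id_atom p /\ p * e = p.

Definition basic : Prop := bal /\ dedekind_complete /\ Id_atomic.

End Defs.

Definition image (A B : lalg) (f : A -> B) (X : A -> Prop) : B -> Prop :=
  fun y => exists2 x, X x & y = f x.

Definition bal_mor (A B : lalg) (f : A -> B) : Prop :=
  (forall a b, f (a + b) = f a + f b) /\
  (forall a b, f (a * b) = f a * f b) /\
  f 1 = 1 /\
  (forall r a, f (sc r a) = sc r (f a)) /\
  (forall a b s, is_lub (pair_set a b) s -> is_lub (pair_set (f a) (f b)) (f s)) /\
  (forall a b m, is_glb (pair_set a b) m -> is_glb (pair_set (f a) (f b)) (f m)).

Definition normal_hom (A B : lalg) (f : A -> B) : Prop :=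
  bal_mor f /\
  (forall X s, is_lub X s -> is_lub (image f X) (f s)) /\
  (forall X m, is_glb X m -> is_glb (image f X) (f m)).

Definition density (A S : lalg) (e : A -> S) : Prop :=
  forall x : S, exists K : S -> Prop,
    (forall k, K k -> exists U : A -> Prop, is_glb (image e U) k) /\
    is_lub K x.

Definition compactness (A S : lalg) (e : A -> S) : Prop :=
  forall (X Y : A -> Prop) (eps : R) (m j : S),
    (0 < eps)%R -> is_glb (image e X) m -> is_lub (image e Y) j ->
    le (m + sc eps 1) j ->
    exists (X' Y' : seq A) (m' j' : S),
      (forall x, x \in X' -> X x) /\ (forall y, y \in Y' -> Y y) /\
      is_glb (image e (fun x => x \in X')) m' /\
      is_lub (image e (fun y => y \in Y')) j' /\
      le m' j'.

Definition canonical_extension (A S : lalg) (e : A -> S) : Prop :=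
  basic S /\ bal_mor e /\ injective e /\ density e /\ compactness e.

(* A basic algebra is, up to isomorphism, the algebra of all
   bounded real functions on its set of atoms: every atom [p] of [Id(B)]
   yields a real character [chi p] of [B] with [c * p = (chi p c) *: p],
   the family of all [chi p] is jointly order-reflecting, it computes
   arbitrary existing joins and meets pointwise, and every bounded family
   of reals is realised by some element.  For the canonical extension
   [e : A -> S] we show in addition, using Compactness, that every real
   character of [A] is of the form [chi q \o e] for an atom [q] of [S].
   Given [alpha : A -> C] with [C] basic, each atom [p] of [C] therefore
   picks an atom [q p] of [S] with [chi (q p) \o e = chi p \o alpha], and
   [gamma] is the element of [C] with coordinates [chi p (gamma x) =
   chi (q p) x]; maps described coordinatewise in this way are normal
   homomorphisms.  Uniqueness follows from Density, since normal
   homomorphisms preserve the joins of meets describing each element. *)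
From Pilot Require Import Defs.
From mathcomp Require Import all_boot all_order all_algebra.
From mathcomp Require Import ring lra Rstruct.
From Stdlib Require Import Classical Epsilon FunctionalExtensionality PropExtensionality.
Set Implicit Arguments. Unset Strict Implicit. Unset Printing Implicit Defensive.
Import GRing.Theory Num.Theory Order.TTheory.
Local Open Scope ring_scope.

Notation "a <=: b" := (le a b) (at level 70, no associativity).
(* The MathComp libraries export functions with these names. *)
Local Notation idempotent := Defs.idempotent.
Local Notation image := Defs.image.

Section Extremal.
Variable B : lalg.
Hypothesis le_anti : forall a b : B, a <=: b -> b <=: a -> a = b.

Lemma lub_uniq (X : B -> Prop) w w' : is_lub X w -> is_lub X w' -> w = w'.
Proof. move=> [h1 h2] [h3 h4]; apply: le_anti; [exact: h2|exact: h4]. Qed.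

Lemma glb_uniq (X : B -> Prop) w w' : is_glb X w -> is_glb X w' -> w = w'.
Proof. move=> [h1 h2] [h3 h4]; apply: le_anti; [exact: h4|exact: h2]. Qed.
End Extremal.

Section LatticeAlgebra.
Variable B : lalg.
Hypothesis HB : lalg_axioms B.
Implicit Types a b c d f p q x y z u v w : B.
Implicit Types r s : R.

Ltac lalg_ax := destruct HB as (?&?&?&?&?&?&?&?&?&?&?&?&?).

Lemma scDr r a b : sc r (a + b) = sc r a + sc r b. Proof. by lalg_ax. Qed.
Lemma scDl r s a : sc (r + s) a = sc r a + sc s a. Proof. by lalg_ax. Qed.
Lemma scA r s a : sc r (sc s a) = sc (r * s) a. Proof. by lalg_ax. Qed.
Lemma sc1 a : sc 1 a = a. Proof. by lalg_ax. Qed.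
Lemma scMl r a b : sc r (a * b) = sc r a * b. Proof. by lalg_ax. Qed.
Lemma lle_refl a : a <=: a. Proof. by lalg_ax. Qed.
Lemma lle_anti a b : a <=: b -> b <=: a -> a = b. Proof. by lalg_ax; eauto. Qed.
Lemma lle_trans a b c : a <=: b -> b <=: c -> a <=: c. Proof. by lalg_ax; eauto. Qed.
Lemma lub_pair_ex a b : exists w, is_lub (pair_set a b) w. Proof. by lalg_ax. Qed.
Lemma lle_addr a b c : a <=: b -> a + c <=: b + c. Proof. by lalg_ax; eauto. Qed.
Lemma lle_mul0 a b : 0 <=: a -> 0 <=: b -> 0 <=: a * b. Proof. by lalg_ax; eauto. Qed.
Lemma lle_sc0 r a : 0 <= r -> 0 <=: a -> 0 <=: sc r a.
Proof. by move=> /RleP hr ha; lalg_ax; auto. Qed.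

Lemma lle_addl a b c : a <=: b -> c + a <=: c + b.
Proof. by rewrite ![c + _]addrC; apply: lle_addr. Qed.
Lemma lle_add2 a b c d : a <=: b -> c <=: d -> a + c <=: b + d.
Proof. move=> h1 h2; apply: (lle_trans (lle_addr c h1)); exact: lle_addl. Qed.
Lemma lle_subP a b : a <=: b <-> 0 <=: b - a.
Proof.
split=> h; first by have := lle_addr (-a) h; rewrite subrr.
by have := lle_addr a h; rewrite add0r subrK.
Qed.
Lemma lle_fromsub a b : 0 <=: b - a -> a <=: b. Proof. exact: (proj2 (lle_subP a b)). Qed.
Lemma lle_tosub a b : a <=: b -> 0 <=: b - a. Proof. exact: (proj1 (lle_subP a b)). Qed.
Lemma lle_opp a b : a <=: b -> -b <=: -a.
Proof. by move/lle_subP => h; apply/lle_subP; rewrite opprK addrC. Qed.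
Lemma lle_subrDr a b c : a <=: b - c <-> a + c <=: b.
Proof.
split=> h; first by have := lle_addr c h; rewrite subrK.
by have := lle_addr (-c) h; rewrite addrK.
Qed.
Lemma lle_sublDr a b c : a - c <=: b <-> a <=: b + c.
Proof.
split=> h; first by have := lle_addr c h; rewrite subrK.
by have := lle_addr (-c) h; rewrite addrK.
Qed.
Lemma lle_sub0 a b : a - b <=: 0 -> a <=: b.
Proof. by move=> h; have := lle_addr b h; rewrite subrK add0r. Qed.
Lemma lle_eq a b c : a = b -> b <=: c -> a <=: c. Proof. by move->. Qed.
Lemma lle_eqr a b c : a <=: b -> b = c -> a <=: c. Proof. by move=> h <-. Qed.

Lemma sc0r a : sc 0 a = 0.
Proof. by apply: (@addrI _ (sc 0 a)); rewrite addr0 -scDl addr0. Qed.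
Lemma scr0 r : sc r (0 : B) = 0.
Proof. by apply: (@addrI _ (sc r 0)); rewrite addr0 -scDr addr0. Qed.
Lemma scNl r a : sc (- r) a = - sc r a.
Proof. by apply: (@addrI _ (sc r a)); rewrite -scDl subrr sc0r subrr. Qed.
Lemma scNr r a : sc r (- a) = - sc r a.
Proof. by apply: (@addrI _ (sc r a)); rewrite -scDr !subrr scr0. Qed.
Lemma scBl r s a : sc (r - s) a = sc r a - sc s a.
Proof. by rewrite scDl scNl. Qed.
Lemma scBr r a b : sc r (a - b) = sc r a - sc r b.
Proof. by rewrite scDr scNr. Qed.
Lemma sc_nat n a : sc n%:R a = a *+ n.
Proof.
elim: n => [|n IH]; first by rewrite sc0r mulr0n.
by rewrite -[n.+1%:R]/(1 *+ n.+1) mulrS scDl sc1 IH mulrS.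
Qed.
Lemma scMr r a b : sc r (a * b) = a * sc r b.
Proof. by rewrite [a * sc _ _]mulrC -scMl mulrC. Qed.
Lemma sc_mul1 r a : sc r a = sc r 1 * a.
Proof. by rewrite -scMl mul1r. Qed.

Lemma lle_sc r a b : 0 <= r -> a <=: b -> sc r a <=: sc r b.
Proof. move=> hr /lle_subP h; apply/lle_subP; rewrite -scBr; exact: lle_sc0. Qed.
Lemma lle_sc_r r s a : r <= s -> 0 <=: a -> sc r a <=: sc s a.
Proof.
move=> hrs ha; apply: lle_fromsub; rewrite -scBl; apply: lle_sc0 => //.
by rewrite subr_ge0.
Qed.
Lemma lle_mulr c a b : 0 <=: c -> a <=: b -> c * a <=: c * b.
Proof. move=> hc /lle_subP h; apply/lle_subP; rewrite -mulrBr; exact: lle_mul0. Qed.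
Lemma lle_mull c a b : 0 <=: c -> a <=: b -> a * c <=: b * c.
Proof. by rewrite ![_ * c]mulrC; apply: lle_mulr. Qed.
Lemma lle_muln a b n : a <=: b -> a *+ n <=: b *+ n.
Proof.
move=> h; elim: n => [|n IH]; first by rewrite !mulr0n; exact: lle_refl.
by rewrite !mulrS; apply: lle_add2.
Qed.
Lemma lle_muln0 a n : 0 <=: a -> 0 <=: a *+ n.
Proof. by move=> h; have := lle_muln n h; rewrite mul0rn. Qed.

Definition lmax a b : B := epsilon (inhabits 0) (is_lub (pair_set a b)).

Lemma lmaxP a b : is_lub (pair_set a b) (lmax a b).
Proof. exact: epsilon_spec (lub_pair_ex a b). Qed.
Lemma lmax_l a b : a <=: lmax a b.
Proof. by case: (lmaxP a b) => h _; apply: h; left. Qed.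
Lemma lmax_r a b : b <=: lmax a b.
Proof. by case: (lmaxP a b) => h _; apply: h; right. Qed.
Lemma lmax_min a b c : a <=: c -> b <=: c -> lmax a b <=: c.
Proof. by move=> h1 h2; case: (lmaxP a b) => _ h; apply: h => x [->|->]. Qed.
Lemma lmaxE a b w : is_lub (pair_set a b) w -> w = lmax a b.
Proof. by move=> h; apply: (lub_uniq lle_anti h (lmaxP a b)). Qed.
Lemma lmaxC a b : lmax a b = lmax b a.
Proof. by apply: lle_anti; apply: lmax_min; (exact: lmax_l || exact: lmax_r). Qed.
Lemma lmaxDr a b c : lmax a b + c = lmax (a + c) (b + c).
Proof.
apply: lle_anti.
  apply/lle_subrDr; apply: lmax_min; apply/lle_subrDr; [exact: lmax_l|exact: lmax_r].
by apply: lmax_min; apply: lle_addr; [exact: lmax_l|exact: lmax_r].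
Qed.
Lemma lmax_mono a a' b : a <=: a' -> lmax a b <=: lmax a' b.
Proof. move=> h; apply: lmax_min; [exact: lle_trans h (lmax_l _ _)|exact: lmax_r]. Qed.
Lemma lmax_idPr a b : a <=: b -> lmax a b = b.
Proof. move=> h; apply: lle_anti; [exact: lmax_min (lle_refl _)|exact: lmax_r]. Qed.

(* In a lattice-ordered group the meet is determined by the join:
   [a /\ b = a + b - (a \/ b)]. *)
Definition lmin a b : B := a + b - lmax a b.

Lemma lmin_l a b : lmin a b <=: a.
Proof.
apply: lle_fromsub; have -> : a - lmin a b = lmax a b - b by rewrite /lmin; ring.
by apply: lle_tosub; exact: lmax_r.
Qed.
Lemma lmin_r a b : lmin a b <=: b.
Proof.
apply: lle_fromsub; have -> : b - lmin a b = lmax a b - a by rewrite /lmin; ring.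
by apply: lle_tosub; exact: lmax_l.
Qed.
Lemma lmin_max a b c : c <=: a -> c <=: b -> c <=: lmin a b.
Proof.
move=> h1 h2; apply: lle_fromsub.
have -> : lmin a b - c = (a + b - c) - lmax a b by rewrite /lmin; ring.
apply: lle_tosub; apply: lmax_min.
  by apply: lle_fromsub; rewrite (_ : a + b - c - a = b - c); [exact: lle_tosub|ring].
by apply: lle_fromsub; rewrite (_ : a + b - c - b = a - c); [exact: lle_tosub|ring].
Qed.
Lemma lminC a b : lmin a b = lmin b a.
Proof. by apply: lle_anti; apply: lmin_max; (exact: lmin_l || exact: lmin_r). Qed.
Lemma lmin_mono2 a a' b b' : a <=: a' -> b <=: b' -> lmin a b <=: lmin a' b'.
Proof.
move=> h1 h2; apply: lmin_max; [exact: lle_trans (lmin_l _ _) h1|].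
exact: lle_trans (lmin_r _ _) h2.
Qed.
Lemma lmin_mono a a' b : a <=: a' -> lmin a b <=: lmin a' b.
Proof. by move=> h; apply: lmin_mono2 (lle_refl _). Qed.
Lemma lmin_idPl a b : a <=: b -> lmin a b = a.
Proof. move=> h; apply: lle_anti; [exact: lmin_l|exact: lmin_max (lle_refl _) h]. Qed.
Lemma lminxx a : lmin a a = a. Proof. exact: lmin_idPl (lle_refl _). Qed.

Definition pos_part a := lmax a 0.
Definition neg_part a := lmax (- a) 0.

Lemma pos_part_ge0 a : 0 <=: pos_part a. Proof. exact: lmax_r. Qed.
Lemma neg_part_ge0 a : 0 <=: neg_part a. Proof. exact: lmax_r. Qed.
Lemma pos_neg_partE a : a = pos_part a - neg_part a.
Proof.
have h : neg_part a + a = lmax 0 a by rewrite /neg_part lmaxDr addNr add0r.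
rewrite /pos_part lmaxC -h; ring.
Qed.
Lemma pos_neg_part_disj a : lmin (pos_part a) (neg_part a) = 0.
Proof.
apply: lle_anti; last exact: lmin_max (pos_part_ge0 _) (neg_part_ge0 _).
set m := lmin _ _.
have h : pos_part a <=: pos_part a - m.
  apply: lmax_min.
    rewrite {1}(pos_neg_partE a); apply: lle_addl; apply: lle_opp; exact: lmin_r.
  by apply: lle_fromsub; rewrite subr0; apply: lle_tosub; exact: lmin_l.
move/lle_subP: h; rewrite (_ : pos_part a - m - pos_part a = - m); last by ring.
by move/lle_opp; rewrite oppr0 opprK.
Qed.
Lemma pos_part_uniq u v : 0 <=: u -> 0 <=: v -> lmin u v = 0 -> pos_part (u - v) = u.
Proof.
move=> hu hv huv; rewrite /pos_part -(subrr v) -lmaxDr.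
have -> : lmax u v = u + v - lmin u v by rewrite /lmin; ring.
by rewrite huv subr0 addrK.
Qed.
Lemma pos_part0 : pos_part 0 = 0. Proof. exact: lmax_idPr (lle_refl _). Qed.

Lemma lmin_subadd a b c : 0 <=: a -> 0 <=: b -> 0 <=: c ->
  lmin a (b + c) <=: lmin a b + lmin a c.
Proof.
move=> ha hb hc; set m := lmin a (b + c).
have h : m - lmin a b <=: lmin a c.
  apply: lmin_max.
    apply: lle_eqr (_ : a + 0 = a); last by rewrite addr0.
    apply: lle_add2; first exact: lmin_l.
    by rewrite -oppr0; apply: lle_opp; exact: lmin_max.
  have -> : m - lmin a b = lmax a b + (m - a - b) by rewrite /lmin; ring.
  rewrite lmaxDr; apply: lmax_min.
    rewrite (_ : a + (m - a - b) = m - b); last by ring.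
    by apply/lle_sublDr; rewrite addrC; exact: lmin_r.
  rewrite (_ : b + (m - a - b) = m - a); last by ring.
  apply: lle_trans hc; apply/lle_sublDr; rewrite add0r; exact: lmin_l.
apply: lle_eq (_ : m = (m - lmin a b) + lmin a b) _; first by rewrite subrK.
by rewrite addrC; apply: lle_addl.
Qed.

Lemma disj_muln a b n : 0 <=: a -> 0 <=: b -> lmin a b = 0 -> lmin a (b *+ n) = 0.
Proof.
move=> ha hb hab; elim: n => [|n IH].
  by rewrite mulr0n lminC lmin_idPl.
apply: lle_anti; last by apply: lmin_max => //; exact: lle_muln0.
rewrite mulrS; apply: lle_trans (lmin_subadd ha hb (lle_muln0 n hb)) _.
by rewrite hab IH addr0; exact: lle_refl.
Qed.
Lemma disj_muln2 a b m n : 0 <=: a -> 0 <=: b -> lmin a b = 0 ->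
  lmin (a *+ m) (b *+ n) = 0.
Proof.
move=> ha hb hab; rewrite lminC; apply: disj_muln => //; first exact: lle_muln0.
by rewrite lminC; apply: disj_muln.
Qed.

Hypothesis Hbd : bounded B.
Hypothesis Har : archimedean B.

Lemma bounded_below a : exists n : nat, - (1 *+ n) <=: a.
Proof. have [n h] := Hbd (- a); exists n; have := lle_opp h; by rewrite opprK. Qed.

Lemma le01 : 0 <=: (1 : B).
Proof.
have [n h] := Hbd (- 1).
have h2 : 0 <=: (1 : B) *+ n.+1 by have := lle_addr 1 h; rewrite addNr mulrSr.
have hr : 0 <= (n.+1%:R : R)^-1 by rewrite invr_ge0 ler0n.
have := lle_sc hr h2; rewrite scr0 -sc_nat scA mulVf ?sc1 //.
by rewrite pnatr_eq0.
Qed.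

Lemma arch_sc p a : 0 <=: p -> (forall eps : R, 0 < eps -> a <=: sc eps p) -> a <=: 0.
Proof.
move=> hp h; apply: (Har (b := p)) => -[|n]; first by rewrite mulr0n.
have hn : 0 < (n.+1%:R : R)^-1 by rewrite invr_gt0 ltr0n.
have hr : 0 <= (n.+1%:R : R) by rewrite ler0n.
have := lle_sc hr (h _ hn); rewrite scA mulfV ?pnatr_eq0 //.
by rewrite sc1 sc_nat.
Qed.

Lemma disj_mull a b c : 0 <=: a -> 0 <=: b -> 0 <=: c -> lmin a b = 0 ->
  lmin (c * a) b = 0.
Proof.
move=> ha hb hc hab; apply: lle_anti; last by apply: lmin_max => //; apply: lle_mul0.
have [n hn] := Hbd c.
have h1 : c * a <=: a *+ n by have := lle_mull ha hn; rewrite mulr_natl.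
apply: (lle_trans (lmin_mono b h1)).
rewrite -(mulr1n b) disj_muln2 //; exact: lle_refl.
Qed.

Lemma disj_mul0 a b : 0 <=: a -> 0 <=: b -> lmin a b = 0 -> a * b = 0.
Proof.
move=> ha hb hab.
have h1 : lmin (b * a) b = 0 by apply: disj_mull.
have h2 : lmin (a * b) (b * a) = 0.
  by apply: disj_mull => //; [exact: lle_mul0|rewrite lminC].
by rewrite mulrC lminxx in h2; rewrite mulrC.
Qed.

Lemma sqr_ge0 a : 0 <=: a * a.
Proof.
have hpn : pos_part a * neg_part a = 0.
  apply: disj_mul0; [exact: pos_part_ge0|exact: neg_part_ge0|exact: pos_neg_part_disj].
rewrite (pos_neg_partE a).
have -> : (pos_part a - neg_part a) * (pos_part a - neg_part a) =
  pos_part a * pos_part a + neg_part a * neg_part a - (pos_part a * neg_part a) *+ 2.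
  by ring.
rewrite hpn mul0rn subr0 -(addr0 0).
by apply: lle_add2; apply: lle_mul0; (exact: pos_part_ge0 || exact: neg_part_ge0).
Qed.

Lemma semiprime z : 0 <=: z -> z * z = 0 -> z = 0.
Proof.
move=> hz hzz; apply: lle_anti (hz); apply: (Har (b := 1)) => n.
have h := sqr_ge0 (z *+ n - 1).
have e : (z *+ n - 1) * (z *+ n - 1) = (z * z) *+ (n * n) - z *+ (n + n) + 1.
  by ring.
rewrite e hzz mul0rn sub0r addrC in h.
have h1 : z *+ (n + n) <=: 1 by apply: lle_fromsub.
apply: lle_trans h1.
rewrite mulrnDr; apply: (lle_eq (esym (addr0 _))); apply: lle_addl; exact: lle_muln0.
Qed.

Lemma mul0_disj a b : 0 <=: a -> 0 <=: b -> a * b = 0 -> lmin a b = 0.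
Proof.
move=> ha hb hab; set m := lmin a b.
have hm : 0 <=: m by exact: lmin_max.
apply: semiprime => //; apply: lle_anti; last exact: sqr_ge0.
apply: (lle_trans (lle_mull hm (lmin_l a b))).
by rewrite -hab; apply: lle_mulr => //; exact: lmin_r.
Qed.

Lemma pos_part_mul c a : 0 <=: c -> pos_part (c * a) = c * pos_part a.
Proof.
move=> hc; rewrite {1}(pos_neg_partE a) mulrBr; apply: pos_part_uniq.
- exact: lle_mul0 hc (pos_part_ge0 a).
- exact: lle_mul0 hc (neg_part_ge0 a).
have h1 : lmin (c * pos_part a) (neg_part a) = 0.
  by apply: disj_mull => //; [exact: pos_part_ge0|exact: neg_part_ge0|exact: pos_neg_part_disj].
rewrite lminC; apply: disj_mull => //; [exact: neg_part_ge0|exact: lle_mul0 hc (pos_part_ge0 a)|].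
by rewrite lminC.
Qed.

Lemma idempotent_ge0 p : idempotent p -> 0 <=: p.
Proof. by move=> h; rewrite -h; exact: sqr_ge0. Qed.
Lemma idempotent_compl p : idempotent p -> idempotent (1 - p).
Proof. by rewrite /idempotent => h; rewrite mulrBl mul1r mulrBr mulr1 h subrr subr0. Qed.
Lemma idempotent_compl_ge0 p : idempotent p -> 0 <=: 1 - p.
Proof. by move=> h; apply: idempotent_ge0; exact: idempotent_compl. Qed.
Lemma idempotent_disj p : idempotent p -> lmin p (1 - p) = 0.
Proof.
move=> h; apply: mul0_disj; [exact: idempotent_ge0|exact: idempotent_compl_ge0|].
by rewrite mulrBr mulr1 h subrr.
Qed.

Hypothesis Hdc : dedekind_complete B.

Lemma glb_ex (X : B -> Prop) : (exists x, X x) -> (exists l, lb X l) ->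
  exists w, is_glb X w.
Proof.
move=> [x hx] [l hl].
have [w [hw1 hw2]] : exists w, is_lub (fun y => X (- y)) w.
  apply: Hdc; first by exists (- x); rewrite opprK.
  by exists (- l) => y hy; have := lle_opp (hl _ hy); rewrite opprK.
exists (- w); split.
  move=> y hy; have hy' : X (- - y) by rewrite opprK.
  by have := lle_opp (hw1 _ hy'); rewrite opprK.
move=> l' hl'; have : w <=: - l'.
  by apply: hw2 => y hy; have := lle_opp (hl' _ hy); rewrite opprK.
by move/lle_opp; rewrite opprK.
Qed.

Lemma lmin_lub (X : B -> Prop) w z : is_lub X w ->
  is_lub (image (fun x => lmin x z) X) (lmin w z).
Proof.
move=> [hw1 hw2]; split.
  by move=> y [x hx ->]; apply: lmin_mono; exact: hw1.
move=> t ht.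
have h : w <=: t + lmax w z - z.
  apply: hw2 => x hx.
  have -> : x = lmin x z + lmax x z - z by rewrite /lmin; ring.
  apply: lle_addr; apply: lle_add2; first by apply: ht; exists x.
  by apply: lmax_mono; exact: hw1.
have := lle_addr (z - lmax w z) h.
have -> : t + lmax w z - z + (z - lmax w z) = t by ring.
by have -> : w + (z - lmax w z) = lmin w z by rewrite /lmin; ring.
Qed.

Lemma lub_disj (X : B -> Prop) w z : is_lub X w ->
  (forall x, X x -> lmin x z <=: 0) -> lmin w z <=: 0.
Proof. by move=> hw hX; case: (lmin_lub z hw) => _; apply => y [x hx ->]; apply: hX. Qed.

(* The truncations [n z /\ p] of the multiples of [z >= 0] by an
   idempotent [p]; their join is the component [f] of [p] in the band
   generated by [z], an idempotent below [p]. *)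
Definition truncations z p := fun w => exists n : nat, w = lmin (z *+ n) p.

Lemma component_ex z p : idempotent p -> exists f, is_lub (truncations z p) f.
Proof.
move=> hp; apply: Hdc; first by exists (lmin (z *+ 0) p), 0%N.
by exists p => w [n ->]; exact: lmin_r.
Qed.

Section Component.
Variables z p f : B.
Hypotheses (hz : 0 <=: z) (hp : idempotent p) (hf : is_lub (truncations z p) f).

Lemma truncation_ge0 n : 0 <=: lmin (z *+ n) p.
Proof. by apply: lmin_max; [exact: lle_muln0|exact: idempotent_ge0]. Qed.
Lemma truncation_le n : lmin (z *+ n) p <=: f.
Proof. by case: hf => h _; apply: h; exists n. Qed.
Lemma component_ge0 : 0 <=: f. Proof. exact: lle_trans (truncation_ge0 0) (truncation_le 0). Qed.
Lemma component_le : f <=: p. Proof. by case: hf => _; apply => w [n ->]; exact: lmin_r. Qed.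

(* Each truncation is disjoint from [p - f]: a common lower bound [g] has
   [M g <= p] for all [M] by induction, hence vanishes. *)
Lemma truncation_disj n : lmin (lmin (z *+ n) p) (p - f) = 0.
Proof.
set g := lmin _ _.
have hg0 : 0 <=: g by apply: lmin_max; [exact: truncation_ge0|exact: lle_tosub component_le].
have hgp m : g <=: p - lmin (z *+ m) p.
  apply: lle_trans (lmin_r _ _) _; apply: lle_addl; apply: lle_opp; exact: truncation_le.
have hM M : g *+ M <=: p.
  elim: M => [|M IH]; first by rewrite mulr0n; exact: idempotent_ge0.
  have h1 : g *+ M <=: lmin (z *+ (n * M)) p.
    apply: lmin_max => //; rewrite mulrnA; apply: lle_muln.
    exact: lle_trans (lmin_l _ _) (lmin_l _ _).
  rewrite mulrS; apply: lle_trans (lle_add2 (hgp (n * M)%N) h1) _.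
  by rewrite subrK; exact: lle_refl.
by apply: lle_anti (hg0); apply: (Har (b := p)).
Qed.

Lemma component_idempotent : idempotent f /\ f * p = f.
Proof.
have hpf : 0 <=: p - f := lle_tosub component_le.
have hfpf : lmin f (p - f) = 0.
  apply: lle_anti; last exact: lmin_max component_ge0 hpf.
  by apply: lub_disj hf _ => _ [n ->]; rewrite truncation_disj; exact: lle_refl.
have e1 : f * (p - f) = 0 by exact: disj_mul0 component_ge0 hpf hfpf.
have e2 : f * (1 - p) = 0.
  apply: disj_mul0 component_ge0 (idempotent_compl_ge0 hp) _.
  apply: lle_anti; last exact: lmin_max component_ge0 (idempotent_compl_ge0 hp).
  by rewrite -(idempotent_disj hp); apply: lmin_mono; exact: component_le.
have efp : f * p = f.
  have -> : f * p = f * 1 - f * (1 - p) by ring.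
  by rewrite e2 subr0 mulr1.
split => //; rewrite /idempotent.
have -> : f * f = f * p - f * (p - f) by ring.
by rewrite e1 subr0 efp.
Qed.
End Component.

Lemma component_disj u v p fu fv : 0 <=: u -> 0 <=: v -> lmin u v = 0 ->
  is_lub (truncations u p) fu -> is_lub (truncations v p) fv -> lmin fu fv <=: 0.
Proof.
move=> hu hv huv hfu hfv; apply: lub_disj hfu _ => _ [n ->].
rewrite lminC; apply: lub_disj hfv _ => _ [m ->].
apply: lle_trans (lmin_mono2 (lmin_l _ _) (lmin_l _ _)) _.
by rewrite lminC disj_muln2 //; exact: lle_refl.
Qed.

Section Atom.
Variable p : B.
Hypothesis hp : Id_atom p.

Lemma atom_idem : idempotent p. Proof. by case: hp. Qed.
Lemma atom_neq0 : p <> 0. Proof. by case: hp => _ []. Qed.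
Lemma atom_ge0 : 0 <=: p. Proof. exact: idempotent_ge0 atom_idem. Qed.

Lemma atom_orth q : Id_atom q -> p <> q -> q * p = 0.
Proof.
move=> hq hpq; have [hqi [_ hqmin]] := hq; have [hpi [_ hpmin]] := hp.
have hi : idempotent (q * p).
  rewrite /Defs.idempotent.
  have -> : q * p * (q * p) = (q * q) * (p * p) by ring.
  by rewrite hqi hpi.
have [//|e2] : q * p = 0 \/ q * p = p by apply: hpmin => //; rewrite -mulrA hpi.
have [e4|e4] : p * q = 0 \/ p * q = q.
  by apply: hqmin; [rewrite mulrC|rewrite -mulrA hqi].
- by rewrite mulrC.
- by case: hpq; rewrite -e2 mulrC e4.
Qed.

Lemma pos_part_ideal x : x * p = x -> pos_part x * p = pos_part x.
Proof.
move=> hx; have hc := idempotent_compl_ge0 atom_idem.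
have h1 : pos_part x * (1 - p) = 0.
  rewrite mulrC -pos_part_mul // (_ : (1 - p) * x = 0) ?pos_part0 //.
  by rewrite mulrBl mul1r mulrC hx subrr.
have -> : pos_part x * p = pos_part x - pos_part x * (1 - p) by ring.
by rewrite h1 subr0.
Qed.

Lemma atom_component z : 0 <=: z -> z * p = z ->
  z = 0 \/ is_lub (truncations z p) p.
Proof.
move=> hz hzp; have [f hf] := component_ex z atom_idem.
have [fi fp] := component_idempotent hz atom_idem hf.
case: hp => _ [_ hmin]; case: (hmin f fi fp) => hf0; last by right; rewrite hf0 in hf.
left; have h : lmin z p = 0.
  apply: lle_anti; last by apply: lmin_max => //; exact: atom_ge0.
  by have := truncation_le hf 1; rewrite mulr1n hf0.
by rewrite -hzp; apply: disj_mul0 => //; exact: atom_ge0.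
Qed.

Lemma atom_ideal_total c r : sc r p <=: c * p \/ c * p <=: sc r p.
Proof.
set x := c * p - sc r p.
have hx : x * p = x by rewrite /x (sc_mul1 r p) mulrBl -!mulrA atom_idem.
have hxE : x = pos_part x - neg_part x := pos_neg_partE x.
have hy : neg_part x * p = neg_part x.
  by apply: pos_part_ideal; rewrite mulNr hx.
case: (atom_component (pos_part_ge0 x) (pos_part_ideal hx)) => [z0|Hz].
  right; apply: lle_fromsub; apply: lle_eqr (neg_part_ge0 x) _.
  have hxn : x = - neg_part x by rewrite {1}hxE z0 sub0r.
  by rewrite -[neg_part x]opprK -hxn /x opprB.
case: (atom_component (neg_part_ge0 x) hy) => [y0|Hy].
  by left; apply: lle_fromsub; rewrite -/x hxE y0 subr0; exact: pos_part_ge0.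
exfalso; apply: atom_neq0; apply: lle_anti; last exact: atom_ge0.
rewrite -{1}(lminxx p); apply: component_disj Hz Hy;
  [exact: pos_part_ge0|exact: neg_part_ge0|exact: pos_neg_part_disj].
Qed.

Lemma sc_atom_le_inv r s : sc r p <=: sc s p -> r <= s.
Proof.
move=> h; rewrite leNgt; apply/negP => hlt.
have h1 : sc (r - s) p <=: 0 by rewrite scBl; apply/lle_sublDr; rewrite add0r.
have hi : 0 <= (r - s)^-1 by rewrite invr_ge0 subr_ge0 ltW.
have := lle_sc hi h1; rewrite scr0 scA mulVf; last by rewrite subr_eq0 gt_eqF.
rewrite sc1 => h2; apply: atom_neq0; exact: lle_anti h2 atom_ge0.
Qed.

Lemma sc_atom_inj r s : sc r p = sc s p -> r = s.
Proof.
by move=> h; apply/eqP; rewrite eq_le !sc_atom_le_inv // h; exact: lle_refl.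
Qed.

(* Every element of [pB] is a real multiple of [p]: the coefficient is the
   supremum of the reals [r] with [r p <= c p]. *)
Lemma atom_ideal_scalar c : exists l, c * p = sc l p.
Proof.
pose E := fun r => sc r p <=: c * p.
have [n hn] := Hbd c; have [n' hn'] := bounded_below c.
have hb : Raxioms.bound E.
  exists n%:R => r hr; apply/RleP; apply: sc_atom_le_inv; apply: lle_trans hr _.
  by have := lle_mull atom_ge0 hn; rewrite mulr_natl sc_nat.
have hne : exists r, E r.
  exists (- n'%:R); rewrite /E scNl sc_nat.
  by have := lle_mull atom_ge0 hn'; rewrite mulNr mulr_natl.
have [l [hl1 hl2]] := Raxioms.completeness E hb hne.
exists l; apply: lle_anti; apply: lle_sub0; apply: (arch_sc atom_ge0) => eps heps.
  case: (atom_ideal_total c (l + eps)) => h.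
    by have /RleP := hl1 _ h; lra.
  by apply/lle_sublDr; apply: lle_trans h _; rewrite scDl addrC; exact: lle_refl.
have [r [hr1 hr2]] : exists r, E r /\ l - eps < r.
  apply: NNPP => hne'.
  suff /RleP : Rdefinitions.Rle l (l - eps) by lra.
  apply: hl2 => r hr; apply/RleP; rewrite leNgt; apply/negP => hlt.
  by apply: hne'; exists r.
apply/lle_sublDr; rewrite (_ : sc l p = sc eps p + sc (l - eps) p); last first.
  by rewrite -scDl; congr (sc _ p); ring.
apply: lle_addl; exact: lle_trans (lle_sc_r (ltW hr2) atom_ge0) hr1.
Qed.

Definition chi c := epsilon (inhabits 0) (fun l => c * p = sc l p).

Lemma chiP c : c * p = sc (chi c) p.
Proof. exact: epsilon_spec (atom_ideal_scalar c). Qed.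
Lemma chi_uniq c l : c * p = sc l p -> chi c = l.
Proof. by move=> h; apply: sc_atom_inj; rewrite -chiP. Qed.

Lemma chiD a b : chi (a + b) = chi a + chi b.
Proof. by apply: chi_uniq; rewrite mulrDl !chiP scDl. Qed.
Lemma chiM a b : chi (a * b) = chi a * chi b.
Proof. by apply: chi_uniq; rewrite -mulrA chiP -scMr chiP scA mulrC. Qed.
Lemma chi1 : chi 1 = 1.
Proof. by apply: chi_uniq; rewrite mul1r sc1. Qed.
Lemma chi_sc r a : chi (sc r a) = r * chi a.
Proof. by apply: chi_uniq; rewrite -scMl chiP scA. Qed.
Lemma chiN a : chi (- a) = - chi a.
Proof. by apply: chi_uniq; rewrite mulNr chiP scNl. Qed.
Lemma chiB a b : chi (a - b) = chi a - chi b.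
Proof. by rewrite chiD chiN. Qed.
Lemma chi0 : chi 0 = 0.
Proof. by apply: chi_uniq; rewrite mul0r sc0r. Qed.
Lemma chi_nat n : chi (1 *+ n) = n%:R.
Proof. by apply: chi_uniq; rewrite mulr_natl sc_nat. Qed.
Lemma chi_le a b : a <=: b -> chi a <= chi b.
Proof. by move=> h; apply: sc_atom_le_inv; rewrite -!chiP; apply: lle_mull => //; exact: atom_ge0. Qed.
Lemma chi_self : chi p = 1.
Proof. by apply: chi_uniq; rewrite atom_idem sc1. Qed.
Lemma chi_other q : Id_atom q -> q <> p -> chi q = 0.
Proof. by move=> hq hqp; apply: chi_uniq; rewrite atom_orth // ?sc0r //; apply: nesym. Qed.
End Atom.

Lemma chi_sc_atom q p t : Id_atom q -> Id_atom p ->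
  chi q (sc t p) = if q == p then t else 0.
Proof.
move=> hq hp; rewrite chi_sc //; case: eqVneq => [->|hqp].
  by rewrite chi_self // mulr1.
by rewrite chi_other ?mulr0 //; apply/eqP; rewrite eq_sym.
Qed.

Hypothesis Hat : Id_atomic B.

(* A nonzero nonnegative element has a positive coordinate: the component
   of [1] generated by [y] is a nonzero idempotent, hence lies above an
   atom [q], and [y] cannot be disjoint from [q]. *)
Lemma pos_has_atom y : 0 <=: y -> y <> 0 -> exists2 q, Id_atom q & 0 < chi q y.
Proof.
move=> hy hne; have h1 : idempotent (1 : B) by rewrite /Defs.idempotent mulr1.
have [f hf] := component_ex y h1.
have [fi _] := component_idempotent hy h1 hf.
have f0 := component_ge0 hy h1 hf.
have fnz : f <> 0.
  move=> ef; apply: hne; rewrite -(mulr1 y); apply: (disj_mul0 hy le01).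
  apply: lle_anti; last exact: (lmin_max hy le01).
  by have := truncation_le hf 1; rewrite mulr1n ef.
have [q [hq hqf]] := Hat fi fnz; exists q => //.
have hq0 := atom_ge0 hq.
have hqy : 0 <= chi q y by rewrite -(chi0 hq); apply: chi_le.
rewrite lt_def hqy andbT; apply/eqP => hqy0.
have dyq : lmin y q = 0 by apply: mul0_disj => //; rewrite chiP // hqy0 sc0r.
have dfq : lmin f q <=: 0.
  apply: lub_disj hf _ => _ [n ->].
  apply: lle_trans (lmin_mono q (lmin_l _ _)) _.
  by rewrite lminC disj_muln //; [exact: lle_refl|rewrite lminC].
have qf : q <=: f.
  apply: lle_fromsub; rewrite -{1}hqf (_ : f - q * f = (1 - q) * f); last by ring.
  by apply: lle_mul0 f0; apply: idempotent_compl_ge0; exact: atom_idem.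
apply: (atom_neq0 hq); apply: lle_anti hq0.
by apply: lle_trans (lmin_max (lle_refl q) qf) _; rewrite lminC.
Qed.

Lemma chi_ge0_inv c : (forall p, Id_atom p -> 0 <= chi p c) -> 0 <=: c.
Proof.
move=> H; case: (classic (neg_part c = 0)) => [h0|hne].
  by rewrite (pos_neg_partE c) h0 subr0; exact: pos_part_ge0.
have [q hq hqy] := pos_has_atom (neg_part_ge0 c) hne.
have hpc : chi q (pos_part c) = 0.
  have : chi q (pos_part c) * chi q (neg_part c) = 0.
    rewrite -chiM // disj_mul0 ?chi0 //;
      [exact: pos_part_ge0|exact: neg_part_ge0|exact: pos_neg_part_disj].
  by move/eqP; rewrite mulf_eq0 (gt_eqF hqy) orbF => /eqP.
have := H q hq; rewrite (pos_neg_partE c) chiB // hpc sub0r oppr_ge0.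
by rewrite leNgt hqy.
Qed.

Lemma chi_le_inv c d : (forall p, Id_atom p -> chi p c <= chi p d) -> c <=: d.
Proof.
move=> H; apply: lle_fromsub; apply: chi_ge0_inv => p hp.
by rewrite chiB // subr_ge0; apply: H.
Qed.

Lemma chi_ext c d : (forall p, Id_atom p -> chi p c = chi p d) -> c = d.
Proof. by move=> H; apply: lle_anti; apply: chi_le_inv => p hp; rewrite H. Qed.

Definition chi_image p (X : B -> Prop) := fun r => exists2 x, X x & r = chi p x.
Definition real_lub (P : R -> Prop) (v : R) :=
  (forall r, P r -> r <= v) /\ (forall u : R, (forall r, P r -> r <= u) -> v <= u).
Definition real_glb (P : R -> Prop) (v : R) :=
  (forall r, P r -> v <= r) /\ (forall u : R, (forall r, P r -> u <= r) -> u <= v).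

(* Moving the [p]-coordinate of [w = \/ X] down to a real upper bound [u]
   of the [p]-coordinates of [X] still gives an upper bound of [X]. *)
Lemma lub_chi (X : B -> Prop) w p : Id_atom p -> is_lub X w ->
  real_lub (chi_image p X) (chi p w).
Proof.
move=> hp [hw1 hw2]; split; first by move=> _ [x hx ->]; apply: chi_le => //; exact: hw1.
move=> u hu; rewrite leNgt; apply/negP => hlt.
suff : w <=: w + sc (u - chi p w) p.
  move/lle_tosub; rewrite addrC addKr -(sc0r p) => /(sc_atom_le_inv hp).
  by rewrite subr_ge0 leNgt hlt.
apply: hw2 => x hx; apply: chi_le_inv => q hq.
rewrite chiD // chi_sc_atom //; case: eqP => [->|_].
  by rewrite addrC subrK; apply: hu; exists x.
by rewrite addr0; apply: chi_le => //; exact: hw1.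
Qed.

Lemma glb_chi (X : B -> Prop) w p : Id_atom p -> is_glb X w ->
  real_glb (chi_image p X) (chi p w).
Proof.
move=> hp [hw1 hw2]; split; first by move=> _ [x hx ->]; apply: chi_le => //; exact: hw1.
move=> u hu; rewrite leNgt; apply/negP => hlt.
suff : w + sc (u - chi p w) p <=: w.
  move/lle_tosub; rewrite opprD addrA subrr sub0r -scNl -(sc0r p).
  by move=> /(sc_atom_le_inv hp); rewrite opprB subr_ge0 leNgt hlt.
apply: hw2 => x hx; apply: chi_le_inv => q hq.
rewrite chiD // chi_sc_atom //; case: eqP => [->|_].
  by rewrite addrC subrK; apply: hu; exists x.
by rewrite addr0; apply: chi_le => //; exact: hw1.
Qed.

Lemma chi_lub (X : B -> Prop) w :
  (forall p, Id_atom p -> real_lub (chi_image p X) (chi p w)) -> is_lub X w.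
Proof.
move=> H; split=> [x hx|u hu]; apply: chi_le_inv => p hp; have [h1 h2] := H p hp.
  by apply: h1; exists x.
by apply: h2 => _ [x hx ->]; apply: chi_le => //; exact: hu.
Qed.

Lemma chi_glb (X : B -> Prop) w :
  (forall p, Id_atom p -> real_glb (chi_image p X) (chi p w)) -> is_glb X w.
Proof.
move=> H; split=> [x hx|u hu]; apply: chi_le_inv => p hp; have [h1 h2] := H p hp.
  by apply: h1; exists x.
by apply: h2 => _ [x hx ->]; apply: chi_le => //; exact: hu.
Qed.

(* Every bounded family of coordinates is realised: the element is the join
   of the "spikes" [f p *: p - M *: (1 - p)]. *)
Lemma chi_surj (f : B -> R) (M : R) : 0 <= M ->
  (forall p, Id_atom p -> - M <= f p <= M) ->
  exists c, forall p, Id_atom p -> chi p c = f p.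
Proof.
move=> hM Hf; pose spike p := sc (f p) p - sc M (1 - p).
have hspike q p : Id_atom q -> Id_atom p ->
    chi q (spike p) = if q == p then f p else - M.
  move=> hq hp; rewrite chiB // chi_sc_atom // chi_sc // chiB // chi1 //.
  case: eqVneq => [->|hqp]; first by rewrite chi_self // subrr mulr0 subr0.
  by rewrite (chi_other hq hp) ?subr0 ?mulr1 ?sub0r //; apply/eqP; rewrite eq_sym.
have [[p0 hp0]|hno] := classic (exists p, Id_atom p); last first.
  by exists 0 => p hp; case: hno; exists p.
pose X u := exists2 p, Id_atom p & u = spike p.
have [c hc] : exists c, is_lub X c.
  apply: Hdc; first by exists (spike p0), p0.
  exists (sc M 1) => _ [p hp ->]; apply: chi_le_inv => q hq.
  rewrite hspike // chi_sc // chi1 // mulr1.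
  by case: eqP => _; [case/andP: (Hf p hp)|rewrite -subr_ge0 opprK addr_ge0].
exists c => q hq; have [h1 h2] := lub_chi hq hc.
apply/eqP; rewrite eq_le; apply/andP; split.
  apply: h2 => _ [_ [p hp ->] ->]; rewrite hspike //.
  by case: eqP => [->|_]; case/andP: (Hf q hq).
by apply: h1; exists (spike q); [exists q|rewrite hspike // eqxx].
Qed.
End LatticeAlgebra.

Section Morphism.
Variables (X Y : lalg) (f : X -> Y).
Hypotheses (HX : lalg_axioms X) (HY : lalg_axioms Y) (hf : bal_mor f).

Lemma morD a b : f (a + b) = f a + f b. Proof. by case: hf. Qed.
Lemma mor1 : f 1 = 1. Proof. by case: hf => _ [] _ []. Qed.
Lemma morsc r a : f (sc r a) = sc r (f a). Proof. by case: hf => _ [] _ [] _ []. Qed.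
Lemma mor0 : f 0 = 0. Proof. by apply: (@addrI _ (f 0)); rewrite -morD !addr0. Qed.
Lemma morB a b : f (a - b) = f a - f b.
Proof. by apply: (@addIr _ (f b)); rewrite -morD !subrK. Qed.
Lemma mor_lmax a b : f (lmax a b) = lmax (f a) (f b).
Proof. by apply: lmaxE => //; case: hf => _ [_ [_ [_ [h _]]]]; apply: h; exact: lmaxP. Qed.
Lemma mor_lmin a b : f (lmin a b) = lmin (f a) (f b).
Proof. by rewrite /lmin morB morD mor_lmax. Qed.
Lemma mor_le a b : a <=: b -> f a <=: f b.
Proof. by move=> h; rewrite -(lmax_idPr HX h) mor_lmax; exact: lmax_l. Qed.

Lemma mor_le_inv : injective f -> forall a b, f a <=: f b -> a <=: b.
Proof.
move=> finj a b h; have h1 : f (lmin a b) = f a by rewrite mor_lmin lmin_idPl.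
by rewrite -(finj _ _ h1); exact: lmin_r.
Qed.
End Morphism.

Definition real_character (X : lalg) (xi : X -> R) : Prop :=
  [/\ forall a b, xi (a + b) = xi a + xi b, xi 1 = 1,
      forall r a, xi (sc r a) = r * xi a &
      forall a b, xi (lmax a b) = Num.max (xi a) (xi b)].

Section RealCharacter.
Variables (X : lalg) (xi : X -> R).
Hypothesis hxi : real_character xi.

Lemma charD a b : xi (a + b) = xi a + xi b. Proof. by case: hxi. Qed.
Lemma char1 : xi 1 = 1. Proof. by case: hxi. Qed.
Lemma char_sc r a : xi (sc r a) = r * xi a. Proof. by case: hxi. Qed.
Lemma char_lmax a b : xi (lmax a b) = Num.max (xi a) (xi b). Proof. by case: hxi. Qed.
Lemma char0 : xi 0 = 0. Proof. by apply: (@addrI _ (xi 0)); rewrite -charD !addr0. Qed.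
Lemma charB a b : xi (a - b) = xi a - xi b.
Proof. by apply: (@addIr _ (xi b)); rewrite -charD !subrK. Qed.
Lemma char_muln a n : xi (a *+ n) = xi a *+ n.
Proof. by elim: n => [|n IH]; rewrite ?mulr0n ?char0 // !mulrS charD IH. Qed.
Lemma char_lmin a b : xi (lmin a b) = Num.min (xi a) (xi b).
Proof.
by rewrite /lmin charB charD char_lmax -(addr_min_max (xi a)) addrK.
Qed.
Lemma char_abs a : xi (lmax a (- a)) = `|xi a|.
Proof. by rewrite char_lmax -sub0r charB char0 sub0r maxrN. Qed.
Lemma char_le : lalg_axioms X -> forall a b, a <=: b -> xi a <= xi b.
Proof. by move=> HX a b h; rewrite -(lmax_idPr HX h) char_lmax le_max lexx. Qed.
End RealCharacter.

Lemma character_comp (X Y : lalg) (f : X -> Y) (xi : Y -> R) :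
  lalg_axioms X -> lalg_axioms Y -> bal_mor f -> real_character xi ->
  real_character (fun a => xi (f a)).
Proof.
move=> HX HY hf hxi; split=> [a b|||a b].
- by rewrite (morD hf) charD.
- by rewrite (mor1 hf) char1.
- by move=> r a; rewrite (morsc hf) char_sc.
by rewrite (mor_lmax HX HY hf) char_lmax.
Qed.

Lemma chi_character (B : lalg) (p : B) :
  lalg_axioms B -> bounded B -> archimedean B -> dedekind_complete B ->
  Id_atomic B -> Id_atom p -> real_character (chi p).
Proof.
move=> HB Hbd Har Hdc Hat hp; split=> [a b|||a b].
- exact: chiD.
- exact: chi1.
- by move=> r a; exact: chi_sc.
have [h1 h2] := lub_chi HB Hbd Har Hdc Hat hp (lmaxP HB a b).
apply/eqP; rewrite eq_le; apply/andP; split.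
  by apply: h2 => _ [x [->|->] ->]; rewrite le_max lexx ?orbT.
by rewrite ge_max; apply/andP; split; apply: h1; [exists a; [left|]|exists b; [right|]].
Qed.

(* Every real character [phi] of [A] is [chi q \o e] for an atom [q] of the
   canonical extension [S]: [q] is found below the meet [k] of the image of
   the "unit cone" [{a >= 0 | phi a = 1}], which is nonzero by Compactness. *)
Section CharacterRealisation.
Variables (A S : lalg) (e : A -> S) (phi : A -> R).
Hypotheses (HA : lalg_axioms A) (HbA : bounded A).
Hypotheses (HS : lalg_axioms S) (HbS : bounded S) (HaS : archimedean S)
  (HdS : dedekind_complete S) (HiS : Id_atomic S).
Hypotheses (be : bal_mor e) (einj : injective e) (hcomp : compactness e).
Hypothesis hphi : real_character phi.

Definition unit_cone (a : A) := phi a = 1 /\ 0 <=: a.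

Lemma unit_cone_lb (l : seq A) : (forall x, x \in l -> unit_cone x) ->
  exists2 a, unit_cone a & forall x, x \in l -> a <=: x.
Proof.
elim: l => [|x l IH] hl.
  by exists 1 => //; split; [exact: char1|exact: le01 HA HbA].
have [|a [pa a0] ha] := IH; first by move=> y hy; apply: hl; rewrite inE hy orbT.
have [px x0] := hl x (mem_head _ _).
exists (lmin x a); first by split; [rewrite char_lmin // px pa minxx|exact: lmin_max].
move=> y; rewrite inE => /predU1P [->|hy]; first exact: lmin_l.
exact: (lle_trans HA (lmin_r HA x a) (ha y hy)).
Qed.

Lemma unit_cone_glb_ex : exists k, is_glb (image e unit_cone) k.
Proof.
apply: glb_ex => //; first by exists (e 1), 1 => //; split; [exact: char1|exact: le01 HA HbA].
by exists 0 => _ [a [_ ha] ->]; rewrite -(mor0 be); exact: mor_le.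
Qed.

(* Compactness applied to [/\ e[unit cone] + 1/2 <= e (1/2)]: a finite part
   of the cone would lie below [1/2], contradicting [phi = 1] on it. *)
Lemma unit_cone_glb_pos k : is_glb (image e unit_cone) k -> ~ k <=: 0.
Proof.
move=> hk hk0; pose h := sc (2^-1) (1 : A).
have heps : Rdefinitions.Rlt 0 (2^-1) by apply/RltP; rewrite invr_gt0 ltr0n.
have hj : is_lub (image e (fun y => y = h)) (e h).
  by split=> [_ [x -> ->]|u hu]; [exact: lle_refl|apply: hu; exists h].
have hle : k + sc (2^-1) 1 <=: e h.
  by rewrite /h (morsc be) (mor1 be); exact: (lle_eqr (lle_addr HS _ hk0) (add0r _)).
have [X' [Y' [m' [j' [hX [hY [hm [hj' hmj]]]]]]]] := hcomp heps hk hj hle.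
have [a [pa _] ha] := unit_cone_lb hX.
have hea : e a <=: m' by case: hm => _; apply=> _ [x hx ->]; apply: mor_le => //; exact: ha.
have hjh : j' <=: e h by case: hj' => _; apply=> _ [y hy ->]; rewrite (hY y hy); exact: lle_refl.
have /(char_le hphi HA) : a <=: h.
  by apply: (mor_le_inv HA HS be einj); exact: (lle_trans HS hea (lle_trans HS hmj hjh)).
by rewrite pa /h char_sc // char1 // mulr1; lra.
Qed.

(* If [chi q k > 0], the character [chi q \o e] vanishes on the kernel of
   [phi]: otherwise [max (1 - n |d|, 0)] is in the cone for a suitable [n]
   while its [q]-coordinate is [0 < chi q k]. *)
Lemma kernel_vanish k q d : is_glb (image e unit_cone) k -> Id_atom q ->
  0 < chi q k -> phi d = 0 -> chi q (e d) = 0.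
Proof.
move=> [hk _] hq hqk pd; apply/eqP; apply: contraT => ht.
have hpsi := character_comp HA HS be (chi_character HS HbS HaS HdS HiS hq).
have hT : 0 < `|chi q (e d)| by rewrite normr_gt0.
set T := `|_| in hT; pose n := Num.Def.archi_bound (T^-1).
have hnT : 1 < T *+ n.
  have hn : T^-1 < n%:R by apply: archi_boundP; rewrite invr_ge0 ltW.
  have hTT : T * T^-1 = 1 by rewrite mulfV // gt_eqF.
  rewrite -mulr_natr; nra.
set w := lmax (1 - lmax d (- d) *+ n) 0.
have hw : forall xi, real_character xi ->
    xi w = Num.max (1 - `|xi d| *+ n) 0.
  by move=> xi hxi; rewrite char_lmax // charB // char1 // char_muln // char_abs // char0.
have Uw : unit_cone w.
  split; last exact: lmax_r.
  by rewrite hw // pd normr0 mul0rn subr0 max_l ?ler01.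
have := chi_le HS HbS HaS HdS hq (hk _ (ex_intro2 _ _ w Uw erefl)).
rewrite (hw _ hpsi) -/T max_r; last by rewrite subr_le0 ltW.
by rewrite leNgt hqk.
Qed.

Lemma character_realised : exists2 q, Id_atom q & forall a, chi q (e a) = phi a.
Proof.
have [k hk] := unit_cone_glb_ex.
have k0 : 0 <=: k.
  by case: hk => _; apply=> _ [a [_ ha] ->]; rewrite -(mor0 be); apply: mor_le.
have [q hq hqk] : exists2 q, Id_atom q & 0 < chi q k.
  apply: pos_has_atom => // k0'; apply: (unit_cone_glb_pos hk); rewrite k0'.
  exact: lle_refl.
exists q => // a; set d := a - sc (phi a) 1.
have pd : phi d = 0 by rewrite /d charB // char_sc // char1 // mulr1 subrr.
have -> : a = d + sc (phi a) 1 by rewrite /d subrK.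
rewrite (morD be) (morsc be) (mor1 be) chiD // chi_sc // chi1 // mulr1.
by rewrite (kernel_vanish hk hq hqk pd) add0r charD // char_sc // char1 // mulr1 pd add0r.
Qed.
End CharacterRealisation.

Lemma image_pair (X Y : lalg) (f : X -> Y) a b :
  image f (pair_set a b) = pair_set (f a) (f b).
Proof.
apply: functional_extensionality => y; apply: propositional_extensionality.
split=> [[x [->|->] ->]|[->|->]]; [left|right|exists a; [left|]|exists b; [right|]] => //.
Qed.

Lemma image_ext (X Y : lalg) (f g : X -> Y) (P : X -> Prop) :
  (forall x, P x -> f x = g x) -> image f P = image g P.
Proof.
move=> H; apply: functional_extensionality => y; apply: propositional_extensionality.
by split=> -[x hx ->]; exists x; rewrite ?H.
Qed.

(* Between basic algebras, a map whose coordinate at each atom [p] is the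
   coordinate at an atom [tau p] is a normal homomorphism, since all the
   structure of a basic algebra is computed coordinatewise. *)
Section CoordinateMap.
Variables (X Y : lalg) (g : X -> Y) (tau : Y -> X).
Hypotheses (HX : lalg_axioms X) (HbX : bounded X) (HaX : archimedean X)
  (HdX : dedekind_complete X) (HiX : Id_atomic X).
Hypotheses (HY : lalg_axioms Y) (HbY : bounded Y) (HaY : archimedean Y)
  (HdY : dedekind_complete Y) (HiY : Id_atomic Y).
Hypothesis tau_atom : forall p, Id_atom p -> Id_atom (tau p).
Hypothesis g_chi : forall p x, Id_atom p -> chi p (g x) = chi (tau p) x.

Lemma chi_image_coord p (P : X -> Prop) : Id_atom p ->
  chi_image p (image g P) = chi_image (tau p) P.
Proof.
move=> hp; apply: functional_extensionality => r; apply: propositional_extensionality.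
by split=> [[_ [x hx ->] ->]|[x hx ->]]; [exists x; rewrite ?g_chi|exists (g x); [exists x|rewrite g_chi]].
Qed.

Lemma coord_lub (P : X -> Prop) s : is_lub P s -> is_lub (image g P) (g s).
Proof.
move=> hs; apply: chi_lub => // p hp; rewrite g_chi // chi_image_coord //.
exact: lub_chi (tau_atom hp) hs.
Qed.

Lemma coord_glb (P : X -> Prop) s : is_glb P s -> is_glb (image g P) (g s).
Proof.
move=> hs; apply: chi_glb => // p hp; rewrite g_chi // chi_image_coord //.
exact: glb_chi (tau_atom hp) hs.
Qed.

Lemma coord_normal : normal_hom g.
Proof.
have ext := chi_ext HY HbY HaY HdY HiY.
split; last by split; [exact: coord_lub|exact: coord_glb].
split; [|split; [|split; [|split]]].
- move=> a b; apply: ext => p hp.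
  by rewrite chiD // !g_chi // chiD //; exact: tau_atom.
- move=> a b; apply: ext => p hp.
  by rewrite chiM // !g_chi // chiM //; exact: tau_atom.
- apply: ext => p hp.
  by rewrite g_chi // !chi1 //; exact: tau_atom.
- move=> r a; apply: ext => p hp.
  by rewrite chi_sc // !g_chi // chi_sc //; exact: tau_atom.
by split=> a b s hs; rewrite -image_pair; [apply: coord_lub|apply: coord_glb].
Qed.
End CoordinateMap.

Lemma normal_hom_unique (A S C : lalg) (e : A -> S) (g1 g2 : S -> C) :
  lalg_axioms C -> density e -> normal_hom g1 -> normal_hom g2 ->
  (forall a, g1 (e a) = g2 (e a)) -> g1 = g2.
Proof.
move=> HC hdens [_ [l1 m1]] [_ [l2 m2]] h12; apply: functional_extensionality => x.
have [K [hK hKx]] := hdens x.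
have hk k : K k -> g1 k = g2 k.
  move=> kK; have [U hU] := hK k kK.
  have := m2 _ _ hU; rewrite -(image_ext (f := g1)) => [|_ [a _ ->] //].
  exact: (glb_uniq (lle_anti HC) (m1 _ _ hU)).
have := l2 _ _ hKx; rewrite -(image_ext (f := g1)) //.
exact: (lub_uniq (lle_anti HC) (l1 _ _ hKx)).
Qed.

Section Extension.
Variables (A S C : lalg) (e : A -> S) (alpha : A -> C).
Hypotheses (HA : lalg_axioms A) (HbA : bounded A).
Hypotheses (HS : lalg_axioms S) (HbS : bounded S) (HaS : archimedean S)
  (HdS : dedekind_complete S) (HiS : Id_atomic S).
Hypotheses (HC : lalg_axioms C) (HbC : bounded C) (HaC : archimedean C)
  (HdC : dedekind_complete C) (HiC : Id_atomic C).
Hypotheses (be : bal_mor e) (einj : injective e) (hcomp : compactness e)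
  (halpha : bal_mor alpha).

Definition transfer (p : C) : S := epsilon (inhabits 0)
  (fun q => Id_atom q /\ forall a, chi q (e a) = chi p (alpha a)).

Lemma transferP p : Id_atom p ->
  Id_atom (transfer p) /\ forall a, chi (transfer p) (e a) = chi p (alpha a).
Proof.
move=> hp; apply: (epsilon_spec (inhabits 0)
  (fun q => Id_atom q /\ forall a, chi q (e a) = chi p (alpha a))).
have hphi := character_comp HA HC halpha (chi_character HC HbC HaC HdC HiC hp).
by have [q hq hqa] := character_realised HA HbA HS HbS HaS HdS HiS be einj hcomp hphi; exists q.
Qed.

(* The coordinates [chi (transfer p) x] of [x] are bounded, so they are
   the coordinates of an element of [C]. *)
Lemma extension_ex (x : S) :
  exists c : C, forall p, Id_atom p -> chi p c = chi (transfer p) x.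
Proof.
have [n1 h1] := HbS x; have [n2 h2] := bounded_below HS HbS x.
apply: (chi_surj HC HbC HaC HdC HiC (M := (n1 + n2)%:R)); first exact: ler0n.
move=> p hp; have [hq _] := transferP hp.
have /(chi_le HS HbS HaS HdS hq) := h1; have /(chi_le HS HbS HaS HdS hq) := h2.
rewrite chiN // !chi_nat // natrD => u2 u1; apply/andP; split.
  by apply: le_trans u2; rewrite lerN2 lerDr ler0n.
by apply: le_trans u1 _; rewrite lerDl ler0n.
Qed.

Definition extension (x : S) : C := epsilon (inhabits 0)
  (fun c => forall p, Id_atom p -> chi p c = chi (transfer p) x).

Lemma extension_chi x p : Id_atom p -> chi p (extension x) = chi (transfer p) x.
Proof. exact: (epsilon_spec _ _ (extension_ex x) p). Qed.

Lemma extension_normal : normal_hom extension.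
Proof.
apply: (coord_normal (tau := transfer)) => // [p hp|p x hp].
  by case: (transferP hp).
exact: extension_chi.
Qed.

Lemma extension_extends a : extension (e a) = alpha a.
Proof.
apply: (chi_ext HC HbC HaC HdC HiC) => p hp.
by rewrite extension_chi //; case: (transferP hp).
Qed.
End Extension.

Theorem theorem4p3 (A S : lalg) (e : A -> S) :
  bal A -> canonical_extension e ->
  forall (C : lalg) (alpha : A -> C), basic C -> bal_mor alpha ->
  exists! gamma : S -> C, normal_hom gamma /\ (forall a, gamma (e a) = alpha a).
Proof.
move=> [HA [HbA _]] [[[HS [HbS HaS]] [HdS HiS]] [be [einj [hdens hcomp]]]]
  C alpha [[HC [HbC HaC]] [HdC HiC]] halpha.
exists (extension e alpha); split.
  split; first exact: extension_normal.
  exact: extension_extends.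
move=> gamma [hgamma hgamma_e]; apply: (normal_hom_unique HC hdens) => //.
  exact: extension_normal.
by move=> a; rewrite hgamma_e extension_extends.
Qed.
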